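(* Let $(\mathbb S,+,\cdot)$ be an S-Field with Base Unit $A$, let $s\in\mathbb S$ and let $m\in\mathbb S_0$ with $m\neq 0$. Then there exist $x,y\in\mathbb S_0$ with $s=x-1+y\cdot A$, and, for such $x,y$, Division By Scalars is given by the unique formula $$\frac{s}{m}=m^{-1}\cdot[x+y-(m^{-1}\cdot y)]-1+(m^{-1}\cdot y)\cdot A.$$
   Context: An S-Structure is a triple $(\mathbb S,+,\cdot)$ where $\mathbb S$ is a set and $+,\cdot$ are binary operations on $\mathbb S$ such that: $(\mathbb S,+)$ is a commutative group with identity $0$ (the inverse of $s$ is written $-s$, and $s-t:=s+(-t)$); $\mathbb S$ is closed under $\cdot$; and there exists $s\in\mathbb S$ with $0\cdot s\neq 0$ or $s\cdot 0\neq 0$. Multiplication binds tighter than addition. The structures considered come with a distinguished element of $\mathbb S$ denoted $1$. It is Commutative if $s\cdot t=t\cdot s$ for all $s,t$. For a Commutative S-Structure and $\alpha\in\mathbb S$, put $\mathbb S_\alpha=\{s\in\mathbb S:0\cdot s=s\cdot 0=\alpha\}$ and $\Lambda=\{\alpha\in\mathbb S:\mathbb S_\alpha\neq\emptyset\}$. Wheel Distributive: $s\cdot(t+r)+(s\cdot 0)=(s\cdot t)+(s\cdot r)$ for all $s,t,r\in\mathbb S$. S-Associative: for all $m,n\in\mathbb S_0$ and $s\in\mathbb S$, $m\cdot(n\cdot s)=(m\cdot n)\cdot s-([(m-1)\cdot(n-1)]\cdot(0\cdot s))$. Base: if $\mathbb S_0\neq\emptyset$ and $\alpha\in\Lambda$,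 $q\in\mathbb S_\alpha$ is a Base for $\mathbb S_\alpha$ if $q+\beta\in\mathbb S_\alpha$ for all $\beta\in\mathbb S_0$ and every $s\in\mathbb S_\alpha$ equals $q+\beta$ for some $\beta\in\mathbb S_0$. Coordinated: $\mathbb S_0\neq\emptyset$ and every $\mathbb S_\alpha$ with $\alpha\in\Lambda$ has a Base. Standard Bases: a Coordinated Commutative S-Structure has Standard Bases if there is a specified element $q_0(1)\in\mathbb S_1$ which is a Base for $\mathbb S_1$, and for every $\alpha\in\Lambda$ the element $q_0(\alpha):=\alpha\cdot(q_0(1)+1)-1$ lies in $\mathbb S_\alpha$ and is a Base for $\mathbb S_\alpha$. The Base Unit is $A:=q_0(1)+1$. An Essential S-Structure is an S-Structure that is Commutative, Wheel Distributive, S-Associative, has Standard Bases (in particular is Coordinated), satisfies $0,1\in\mathbb S_0$, and satisfies $\mathbb S_0=\{1\cdot x:x\in\mathbb S_0\}$. A Unity is an element $e\in\Lambda$ with $e\cdot s=s\cdot e=s$ for all $s\in\mathbb S$. Scalar Inverses: the structure has a Unity $e$ and for every $x\in\mathbb S_0$ with $x\neq 0$ there is $x^{-1}\in\mathbb S_0$ with $x\cdot x^{-1}=x^{-1}\cdot x=e$. An S-Ring is an Essential S-Structure with a Unity; an S-Field is an S-Ring with Scalar Inverses. Division By Scalars: for $s\in\mathbb S$ and $m\in\mathbb S_0$, $\frac{s}{m}$ denotes an element $q\in\mathbb S$ such that $s=m\cdot q=q\cdot m$. *)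

(* An S-Structure is modelled as a commutative group
   (V : zmodType, i.e. (S,+) with 0, -, +) together with an arbitrary binary
   operation [mul] (the "·" of the paper) and a distinguished element [one]
   (the paper's 1, which is NOT a ring unit).  *)
From mathcomp Require Import all_boot all_algebra.
Set Implicit Arguments. Unset Strict Implicit. Unset Printing Implicit Defensive.
Import GRing.Theory.
Local Open Scope ring_scope.

Section SStructures.
Variables (V : zmodType) (mul : V -> V -> V) (one : V).

(* S-Structure: (V,+) is a commutative group (built into zmodType), closure
   under mul is built into its type, and mul is not absorbing at 0. *)
Definition S_Structure : Prop :=
  exists s : V, mul 0 s <> 0 \/ mul s 0 <> 0.

Definition S_Commutative : Prop := forall s t : V, mul s t = mul t s.

Definition S_ (alpha : V) (s : V) : Prop := mul 0 s = alpha /\ mul s 0 = alpha.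
Definition S0 (s : V) : Prop := S_ 0 s.

Definition Lambda (alpha : V) : Prop := exists s, S_ alpha s.

Definition Wheel_Distributive : Prop :=
  forall s t r : V, mul s (t + r) + mul s 0 = mul s t + mul s r.

Definition S_Associative : Prop :=
  forall m n s : V, S0 m -> S0 n ->
    mul m (mul n s) = mul (mul m n) s - mul (mul (m - one) (n - one)) (mul 0 s).

(* q is a Base for S_alpha (the paper requires S_0 nonempty and alpha in Lambda) *)
Definition is_Base (alpha q : V) : Prop :=
  S_ alpha q /\
  (forall beta, S0 beta -> S_ alpha (q + beta)) /\
  (forall s, S_ alpha s -> exists beta, S0 beta /\ s = q + beta).

Definition Coordinated : Prop :=
  (exists s, S0 s) /\ forall alpha, Lambda alpha -> exists q, is_Base alpha q.

Definition q0 (q01 alpha : V) : V := mul alpha (q01 + one) - one.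

Definition Standard_Bases (q01 : V) : Prop :=
  S_ one q01 /\ is_Base one q01 /\
  forall alpha, Lambda alpha -> S_ alpha (q0 q01 alpha) /\ is_Base alpha (q0 q01 alpha).

Definition Base_Unit (q01 : V) : V := q01 + one.

Definition Essential (q01 : V) : Prop :=
  S_Structure /\ S_Commutative /\ Wheel_Distributive /\ S_Associative /\
  Coordinated /\ Standard_Bases q01 /\ S0 0 /\ S0 one /\
  (forall z, S0 z <-> exists x, S0 x /\ z = mul one x).

Definition is_Unity (e : V) : Prop :=
  Lambda e /\ forall s, mul e s = s /\ mul s e = s.

Definition Scalar_Inverses : Prop :=
  exists e, is_Unity e /\
    forall x, S0 x -> x <> 0 -> exists xinv, S0 xinv /\ mul x xinv = e /\ mul xinv x = e.

Definition S_Ring (q01 : V) : Prop := Essential q01 /\ exists e, is_Unity e.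

Definition S_Field (q01 : V) : Prop := S_Ring q01 /\ Scalar_Inverses.

End SStructures.

(** The paper's constant [1] is forced to be the Unity [e]: taking [m = e] in
    S-associativity, with [s ∈ S_1] so that [0·s = 1], gives
    [(e-1)·(n-1)·1 = 0] for every scalar [n]; the cases [n = 0] and [n = e]
    give [1·1 = 1], and since every scalar has the form [1·x] this yields
    [1·k = k] on [S_0], in particular [e = 1·e = 1].  With [1] a unity,
    scalars act additively, associate with each other and commute with [0·_],
    so an invertible scalar [m] is cancellable on the left.  Every [s] lies in
    [S_α] with [α = 0·s], whose Standard Base is [α·A - 1], whence
    [s = x - 1 + y·A] with [y = α]; the quotient formula is then checked by
    expanding [m·q], where the S-associativity defect [(m-1)·(u-1)·(0·A)]
    equals [(m-1)·(u-1)] because [0·A = 1]. *)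
From mathcomp Require Import all_boot all_algebra.
Import GRing.Theory.
Local Open Scope ring_scope.

Lemma subr_eq_id (V : zmodType) (x y : V) : x = x - y -> y = 0.
Proof. by move=> xBy; apply: oppr_inj; apply: (addrI x); rewrite -xBy oppr0 addr0. Qed.

Section Scalars.
Context {V : zmodType} {mul : V -> V -> V}.
Local Infix "⋅" := mul (at level 40, left associativity).
Hypotheses (mulC : S_Commutative mul) (wheel : Wheel_Distributive mul).
Hypothesis S0_0 : S0 mul 0.

Lemma mul_wheelD s t r : s ⋅ (t + r) = s ⋅ t + s ⋅ r - s ⋅ 0.
Proof. by rewrite -wheel addrK. Qed.

Section LeftScalar.
Context {k : V} (Sk : S0 mul k).

Lemma mulD_S0 t r : k ⋅ (t + r) = k ⋅ t + k ⋅ r.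
Proof. by rewrite mul_wheelD Sk.2 subr0. Qed.

Lemma mulN_S0 t : k ⋅ (- t) = - (k ⋅ t).
Proof. by apply/eqP; rewrite -addr_eq0 -mulD_S0 addNr Sk.2. Qed.

Lemma mulB_S0 t r : k ⋅ (t - r) = k ⋅ t - k ⋅ r.
Proof. by rewrite mulD_S0 mulN_S0. Qed.

End LeftScalar.

Lemma S0_intro k : 0 ⋅ k = 0 -> S0 mul k.
Proof. by split; rewrite // mulC. Qed.

Lemma S0D {a b} : S0 mul a -> S0 mul b -> S0 mul (a + b).
Proof. by move=> [a0 _] [b0 _]; apply: S0_intro; rewrite mulD_S0 // a0 b0 addr0. Qed.

Lemma S0N {a} : S0 mul a -> S0 mul (- a).
Proof. by move=> [a0 _]; apply: S0_intro; rewrite mulN_S0 // a0 oppr0. Qed.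

Lemma S0B {a b} : S0 mul a -> S0 mul b -> S0 mul (a - b).
Proof. by move=> Sa Sb; apply: S0D => //; apply: S0N. Qed.

Section OneUnity.
Context {one : V}.
Hypotheses (massoc : S_Associative mul one) (S0_1 : S0 mul one).
Hypothesis mul1s : forall s, one ⋅ s = s.

Lemma muls1 s : s ⋅ one = s.
Proof. by rewrite mulC mul1s. Qed.

Lemma mul0_mul0 t : 0 ⋅ (0 ⋅ t) = 0.
Proof.
apply: (@subr_eq_id _ t).
by have := massoc _ _ t S0_1 S0_1; rewrite !mul1s subrr S0_0.1.
Qed.

Lemma S0_mul0 t : S0 mul (0 ⋅ t).
Proof. exact/S0_intro/mul0_mul0. Qed.

Lemma S0M {a b} : S0 mul a -> S0 mul b -> S0 mul (a ⋅ b).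
Proof.
move=> Sa Sb; have defect0 : (a - one) ⋅ (b - one) ⋅ 0 = 0.
  by apply: (@subr_eq_id _ (a ⋅ b)); have := massoc _ _ one Sa Sb; rewrite !muls1.
have := massoc _ _ 0 Sa Sb; rewrite Sb.2 Sa.2 S0_0.1 defect0 subr0 => ab0.
by apply: S0_intro; rewrite mulC -ab0.
Qed.

Lemma mulA_S0 a b t : S0 mul a -> S0 mul b -> S0 mul t -> a ⋅ (b ⋅ t) = a ⋅ b ⋅ t.
Proof.
move=> Sa Sb St; rewrite massoc // St.1.
by rewrite (S0M (S0B Sa S0_1) (S0B Sb S0_1)).2 subr0.
Qed.

Lemma mul0_S0 n t : S0 mul n -> 0 ⋅ (n ⋅ t) = n ⋅ (0 ⋅ t).
Proof.
move=> Sn; have S0t := S0_mul0 t; rewrite massoc // Sn.1 sub0r.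
rewrite [(- one) ⋅ _]mulC (mulN_S0 (S0B Sn S0_1)) muls1.
by rewrite [(- _) ⋅ _]mulC (mulN_S0 S0t) (mulB_S0 S0t) muls1 opprK addrC subrK mulC.
Qed.

Lemma mulS0_inj {m minv} :
  S0 mul m -> S0 mul minv -> minv ⋅ m = one -> injective (mul m).
Proof.
move=> Sm Sminv minvK; set z := (minv - one) ⋅ (m - one).
have Sz : S0 mul z by apply: S0M; apply: S0B.
have mulK t : minv ⋅ (m ⋅ t) = t - z ⋅ (0 ⋅ t) by rewrite massoc // minvK mul1s.
move=> t r eq_mt_mr.
have eq0 : 0 ⋅ t = 0 ⋅ r.
  have := congr1 (fun v => minv ⋅ (0 ⋅ v)) eq_mt_mr.
  by rewrite /= !mul0_S0 // !mulK !mul0_mul0 Sz.2 !subr0.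
by have := congr1 (mul minv) eq_mt_mr; rewrite !mulK eq0 => /addIr.
Qed.

Lemma mul0_Base_Unit q01 : S_ mul one q01 -> 0 ⋅ Base_Unit one q01 = one.
Proof. by move=> Sq01; rewrite mulD_S0 // Sq01.1 S0_1.1 addr0. Qed.

Lemma Standard_Bases_decomposition q01 s : Standard_Bases mul one q01 ->
  exists x y, S0 mul x /\ S0 mul y /\ s = x - one + y ⋅ Base_Unit one q01.
Proof.
move=> [_ [_ std]]; set alpha := 0 ⋅ s.
have Ss : S_ mul alpha s by split; rewrite // mulC.
have [_ [_ [_ /(_ s Ss) [beta [Sbeta ->]]]]] := std alpha (ex_intro _ s Ss).
exists beta, alpha; split=> //; split; first exact: S0_mul0.
by rewrite /q0 /Base_Unit addrC addrA addrAC.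
Qed.

Lemma mul_quotient_S0 m minv x y A : S0 mul m -> S0 mul minv -> minv ⋅ m = one ->
  S0 mul x -> S0 mul y -> 0 ⋅ A = one ->
  let u := minv ⋅ y in
  m ⋅ (minv ⋅ (x + y - u) - one + u ⋅ A) = x - one + y ⋅ A.
Proof.
move=> Sm Sminv minvK Sx Sy A_unit u.
have Su : S0 mul u by apply: S0M.
have mK t : S0 mul t -> m ⋅ (minv ⋅ t) = t.
  by move=> St; rewrite mulA_S0 // [m ⋅ _]mulC minvK mul1s.
have mu : m ⋅ u = y by exact: mK.
have defect : (m - one) ⋅ (u - one) = (y - u) - (m - one).
  rewrite (mulB_S0 (S0B Sm S0_1)) muls1 [(m - one) ⋅ u]mulC (mulB_S0 Su) muls1.
  by rewrite [u ⋅ m]mulC mu.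
have Sw : S0 mul (x + y - u) by apply: S0B => //; apply: S0D.
rewrite !(mulD_S0 Sm) (mulN_S0 Sm) (massoc _ _ A Sm Su) A_unit !muls1.
rewrite (mK _ Sw) mu defect opprB (addrC (y ⋅ A)) addrA; congr (_ + _).
by rewrite addrA addrA subrK addrAC -(addrA x) addrK.
Qed.

End OneUnity.

Lemma unity_eq_one one e : S_Associative mul one -> S0 mul one ->
  (forall z, S0 mul z -> exists x, S0 mul x /\ z = one ⋅ x) ->
  Lambda mul one -> is_Unity mul e -> e = one.
Proof.
move=> massoc S0_1 S0_mul1 [a [a_unit _]] [_ eK].
have S0e : S0 mul e by apply: S0_intro; rewrite mulC (eK 0).1.
have S0e1 : S0 mul (e - one) by apply: S0B.
have defect0 n : S0 mul n -> one ⋅ ((e - one) ⋅ (n - one)) = 0.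
  move=> Sn; have := massoc _ _ a S0e Sn; rewrite !(eK _).1 a_unit [_ ⋅ one]mulC.
  exact: subr_eq_id.
have d0 : one ⋅ ((e - one) ⋅ one) = 0.
  have := defect0 0 S0_0; rewrite sub0r (mulN_S0 S0e1) (mulN_S0 S0_1).
  by move/eqP; rewrite oppr_eq0 => /eqP.
have one_one : one ⋅ one = one.
  have := defect0 e S0e; rewrite (mulB_S0 S0e1) (eK _).2 (mulB_S0 S0_1) d0 subr0.
  rewrite (mulB_S0 S0_1) [one ⋅ e]mulC (eK _).1.
  by move/eqP; rewrite subr_eq0 => /eqP.
have mul1_S0 k : S0 mul k -> one ⋅ k = k.
  move=> /S0_mul1 [x [Sx ->]].
  by rewrite massoc // one_one subrr S0_0.1 Sx.1 S0_0.1 subr0.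
by rewrite -(mul1_S0 e S0e) mulC (eK _).1.
Qed.

End Scalars.

Theorem proposition4p1p1 (V : zmodType) (mul : V -> V -> V) (one q01 : V)
  (HF : S_Field mul one q01) (s m : V) (Hm : S0 mul m) (Hm0 : m <> 0) :
  let A := Base_Unit one q01 in
  (exists x y, S0 mul x /\ S0 mul y /\ s = x - one + mul y A) /\
  (forall x y, S0 mul x -> S0 mul y -> s = x - one + mul y A ->
   forall e minv, is_Unity mul e -> S0 mul minv -> mul m minv = e -> mul minv m = e ->
   let q := mul minv (x + y - mul minv y) - one + mul (mul minv y) A in
   (s = mul m q /\ s = mul q m) /\
   (forall q', s = mul m q' -> s = mul q' m -> q' = q)).
Proof.
move=> A.
have [[[_ [mulC [wheel [massoc [_ [std [S0_0 [S0_1 S0_mul1]]]]]]]] [e0 Ue0]] _] := HF.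
have unity_is_one : forall e, is_Unity mul e -> e = one.
  move=> e; apply: unity_eq_one => // [z /S0_mul1 //|].
  by exists q01; case: std.
have mul1s t : mul one t = t by rewrite -(unity_is_one e0 Ue0); exact: (Ue0.2 t).1.
split; first exact: Standard_Bases_decomposition.
move=> x y Sx Sy -> e minv Ue Sminv _ minvK q.
rewrite {}(unity_is_one e Ue) in minvK.
have mq : mul m q = x - one + mul y A.
  by apply: mul_quotient_S0 => //; apply: mul0_Base_Unit => //; case: std.
split; first by split; rewrite ?[mul q m]mulC mq.
move=> q' mq' _; apply: (mulS0_inj mulC wheel S0_0 massoc S0_1 mul1s Hm Sminv minvK).
by rewrite -mq' mq.
Qed.
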